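(* Let $G$ be a graph with minimum degree $\delta(G)$, and let $m$ be a positive integer with $m > \frac{\chi_\rho(G)}{\delta(G)}$ (so in particular $\delta(G)\ge 1$). Then $\chi_\rho(FSSD_m(G)) = \chi_\rho(FSSD_{m+1}(G))$.
   Context: All graphs are finite and simple. For a positive integer $i$, an $i$-packing in a graph is a set of vertices any two distinct members of which are at distance greater than $i$. The packing chromatic number $\chi_\rho(H)$ of a graph $H$ is the smallest integer $k$ such that $V(H)$ can be partitioned into sets $V_1,\dots,V_k$ with each $V_i$ an $i$-packing. For a positive integer $m$, $FSSD_m(G)$ is obtained from $G$ by replacing each edge $uv$ of $G$ by a copy of $K_{2,m}$: the edge $uv$ is deleted and $m$ new vertices are added, each adjacent to exactly $u$ and $v$. *)

From mathcomp Require Import all_boot.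
Set Implicit Arguments. Unset Strict Implicit. Unset Printing Implicit Defensive.

(* A finite simple graph: vertex type T : finType, adjacency e : rel T,
   assumed symmetric and irreflexive (as hypotheses of the theorem). *)

Section Graph.
Variables (T : finType) (e : rel T).

Fixpoint ball (i : nat) (u : T) : {set T} :=
  if i is i'.+1 then ball i' u :|: [set y | [exists x in ball i' u, e x y]]
  else [set u].

Definition packing (i : nat) (A : {set T}) : bool :=
  [forall u in A, forall v in A, (u != v) ==> (v \notin ball i u)].

(* V(G) partitions into V_1, ..., V_k with V_i an i-packing;
   color j : 'I_k stands for the class V_(j+1). *)
Definition packing_colorable (k : nat) : bool :=
  [exists f : {ffun T -> 'I_k},
     [forall j : 'I_k, packing j.+1 [set x | f x == j]]].

Lemma packing_colorable_exists : exists k, packing_colorable k.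
Proof.
exists #|T|; apply/existsP; exists [ffun x => enum_rank x].
apply/forallP => j; apply/forallP => u; apply/implyP; rewrite inE ffunE => /eqP hu.
apply/forallP => v; apply/implyP; rewrite inE ffunE => /eqP hv.
apply/implyP => huv; exfalso; move/negP: huv; apply.
by apply/eqP; apply: enum_rank_inj; rewrite hu hv.
Qed.

Definition packing_chromatic_number : nat := ex_minn packing_colorable_exists.

(* minimum degree (for an empty vertex set this is #|T| = 0) *)
Definition min_degree : nat := \big[minn/#|T|]_(x : T) #|[set y | e x y]|.

(* FSSD_m(G): each edge uv (stored once, as the pair (u,v) with
   enum_rank u < enum_rank v) is replaced by m new vertices adjacent to u and v. *)
Definition fssd_edge : pred (T * T) :=
  [pred p | e p.1 p.2 && (enum_rank p.1 < enum_rank p.2)].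

Definition fssd_vertex (m : nat) : finType :=
  (T + ({p : T * T | fssd_edge p} * 'I_m))%type.

Definition fssd_adj (m : nat) : rel (fssd_vertex m) :=
  fun a b =>
    match a, b with
    | inl u, inr (p, _) => (u == (val p).1) || (u == (val p).2)
    | inr (p, _), inl u => (u == (val p).1) || (u == (val p).2)
    | _, _ => false
    end.

End Graph.

From mathcomp Require Import all_boot zify.
Set Implicit Arguments. Unset Strict Implicit. Unset Printing Implicit Defensive.

(* Embedding FSSD_m into FSSD_(m+1) gives one inequality.  For the other, take
   an optimal packing colouring of FSSD_m with k colours.  Colouring every
   subdivision vertex 1 and each original vertex u with c(u) + 1, for an optimal
   colouring c of G, shows k <= chi_rho(G) + 1.  If an original vertex u had
   colour 1, its m deg(u) neighbours would need pairwise distinct colours other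
   than 1, so m deg(u) < k <= chi_rho(G) + 1 <= m delta(G), which is absurd.
   Hence colour 1 is used on subdivision vertices only, and the colouring
   transfers to FSSD_(m+1) by giving all its subdivision vertices colour 1:
   folding copy i onto copy i mod m does not bring original vertices closer. *)

Section Balls.
Variables (T : finType) (e : rel T).

Lemma ball_center i u : u \in ball e i u.
Proof. by elim: i => [|i IHi] /=; rewrite !inE ?IHi. Qed.

Lemma ball_subS i u x : x \in ball e i u -> x \in ball e i.+1 u.
Proof. by move=> x_in /=; rewrite inE x_in. Qed.

Lemma ball_sub i j u x : i <= j -> x \in ball e i u -> x \in ball e j u.
Proof.
move=> /subnK <-; elim: (j - i) => [|n IHn] //= x_in.
by rewrite inE IHn.
Qed.

Lemma ball_step i u x y : x \in ball e i u -> e x y -> y \in ball e i.+1 u.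
Proof.
by move=> x_in exy /=; rewrite !inE; apply/orP; right; apply/existsP; exists x; rewrite x_in.
Qed.

Lemma ballSP i u y : y \in ball e i.+1 u ->
  y \in ball e i u \/ exists2 x, x \in ball e i u & e x y.
Proof.
rewrite /= !inE => /orP [->|/existsP [x /andP [x_in exy]]]; first by left.
by right; exists x.
Qed.

Lemma mem_ball1 u y : y \in ball e 1 u -> (y == u) || e u y.
Proof.
case/ballSP => [|[x]]; rewrite /= inE; first by move=> ->.
by move=> /eqP -> ->; rewrite orbT.
Qed.

Lemma packingP i (A : {set T}) :
  reflect (forall u v, u \in A -> v \in A -> u != v -> v \notin ball e i u)
          (packing e i A).
Proof.
apply: (iffP forallP) => [h u v u_in v_in u_neq_v | h u].
  by move: (h u); rewrite u_in => /forallP /(_ v); rewrite v_in u_neq_v.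
apply/implyP => u_in; apply/forallP => v; apply/implyP => v_in.
by apply/implyP; apply: h.
Qed.

End Balls.

Section Colorings.
Variables (T : finType) (e : rel T).

Definition is_packing_coloring k (f : {ffun T -> 'I_k}) :=
  forall a b, a != b -> f a = f b -> b \notin ball e (f a).+1 a.

Lemma packing_colorableP k :
  reflect (exists f : {ffun T -> 'I_k}, is_packing_coloring f) (packing_colorable e k).
Proof.
apply: (iffP existsP) => [[f /forallP f_col] | [f f_col]]; exists f.
  move=> a b a_neq_b fab; apply: (packingP _ _ _ (f_col (f a))) a_neq_b;
  by rewrite inE ?fab.
apply/forallP => j; apply/packingP => a b a_in b_in a_neq_b.
rewrite !inE in a_in b_in; rewrite -(eqP a_in).
by apply: f_col a_neq_b _; rewrite (eqP a_in) (eqP b_in).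
Qed.

Lemma colorable_pcn : packing_colorable e (packing_chromatic_number e).
Proof. by rewrite /packing_chromatic_number; case: ex_minnP. Qed.

Lemma pcn_le k : packing_colorable e k -> packing_chromatic_number e <= k.
Proof. by rewrite /packing_chromatic_number; case: ex_minnP => n _; apply. Qed.

Lemma min_degree_le x : min_degree e <= #|[set y | e x y]|.
Proof.
rewrite /min_degree; have : x \in index_enum T by rewrite mem_index_enum.
elim: (index_enum T) => [//|a r IHr]; rewrite inE big_cons => /orP [/eqP <-|/IHr le_r].
  exact: geq_minl.
by rewrite geq_min le_r orbT.
Qed.

Lemma min_degree_le_card : min_degree e <= #|T|.
Proof.
rewrite /min_degree; apply: (big_ind (fun n => n <= #|T|)) => //.
  by move=> a b le_a _; rewrite geq_min le_a.
by move=> x _; apply: max_card.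
Qed.

Hypotheses (e_sym : symmetric e) (e_irr : irreflexive e).

(* Two neighbours of [u] are at distance at most 2, so they can only share
   colour 1, which [u] itself occupies. *)
Lemma card_nbhd_lt_color0 k (f : {ffun T -> 'I_k}) u :
  is_packing_coloring f -> f u = 0 :> nat -> #|[set y | e u y]| < k.
Proof.
move=> f_col fu0; set N := [set y | e u y].
have near_u y : e u y -> y \in ball e 1 u by apply: ball_step (ball_center _ _ _).
have f_nbhd y : y \in N -> f y != f u.
  rewrite inE => euy; apply: contraTneq (near_u _ euy) => fyu.
  have u_neq_y : u != y by apply: contraTneq euy => <-; rewrite e_irr.
  by have := f_col u y u_neq_y (esym fyu); rewrite fu0.
have f_inj : {in N &, injective f}.
  move=> y1 y2 y1_in y2_in fy12; apply/eqP/contraT => y1_neq_y2.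
  case/negP: (f_col y1 y2 y1_neq_y2 fy12).
  have f_gt0 : 0 < f y1.
    by rewrite lt0n -fu0; apply/negP=> /eqP /val_inj /eqP; apply/negP/f_nbhd.
  apply: (@ball_sub _ _ 2); first by [].
  rewrite !inE in y1_in y2_in.
  by apply: ball_step y2_in; apply: ball_step (ball_center _ _ _) _; rewrite e_sym.
have k_gt0 : 0 < k by apply: leq_ltn_trans (ltn_ord (f u)).
rewrite -(card_in_imset f_inj); apply: (@leq_ltn_trans #|[set~ f u]|).
  by apply/subset_leq_card/subsetP => _ /imsetP [y y_in ->]; rewrite !inE f_nbhd.
by rewrite cardsC1 card_ord ltn_predL k_gt0.
Qed.

End Colorings.

Section Homomorphisms.
Variables (T1 T2 : finType) (e1 : rel T1) (e2 : rel T2) (h : T1 -> T2).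
Hypothesis h_adj : forall x y, e1 x y -> e2 (h x) (h y).

Lemma ball_hom i a x : x \in ball e1 i a -> h x \in ball e2 i (h a).
Proof.
elim: i x => [|i IHi] x; first by rewrite /= !inE => /eqP ->.
case/ballSP => [/IHi /ball_subS // | [y /IHi y_in e1yx]].
exact: ball_step y_in (h_adj e1yx).
Qed.

Lemma colorable_hom k : injective h ->
  packing_colorable e2 k -> packing_colorable e1 k.
Proof.
move=> h_inj /packing_colorableP [g g_col]; apply/packing_colorableP.
exists [ffun x => g (h x)] => a b a_neq_b; rewrite !ffunE => gab.
have h_neq : h a != h b by rewrite (inj_eq h_inj).
by apply: contra (g_col _ _ h_neq gab); apply: ball_hom.
Qed.

Lemma pcn_hom : injective h ->
  packing_chromatic_number e1 <= packing_chromatic_number e2.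
Proof. by move=> h_inj; apply/pcn_le/(colorable_hom h_inj)/colorable_pcn. Qed.

End Homomorphisms.

Section Subdivision.
Variables (T : finType) (e : rel T).
Hypotheses (e_sym : symmetric e) (e_irr : irreflexive e).

Notation fssd m := (@fssd_adj T e m).

Lemma fssd_adj_sym m : symmetric (fssd m).
Proof. by case=> [?|[? ?]] [?|[? ?]]. Qed.

Lemma fssd_adj_irr m : irreflexive (fssd m).
Proof. by case=> [?|[? ?]]. Qed.

(* A walk from [inl u] alternates between original and subdivision vertices,
   so it needs two steps per edge of [G]. *)
Lemma fssd_ball_from_inl m u n (x : fssd_vertex e m) :
  x \in ball (fssd m) n (inl u) ->
  match x with
  | inl v => v \in ball e n./2 u
  | inr (p, _) =>
      (0 < n) && (((val p).1 \in ball e n.-1./2 u) || ((val p).2 \in ball e n.-1./2 u))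
  end.
Proof.
elim: n x => [|n IHn] x; first by rewrite /= inE => /eqP ->; rewrite inE.
case/ballSP => [/IHn x_in | [y /IHn y_in adj_yx]].
  case: x x_in => [v|[p i]]; first by apply: ball_sub; apply: half_leq.
  case/andP => n_gt0 /orP [] p_in; apply/andP; split => //; apply/orP; [left|right];
  by apply: ball_sub p_in; apply/half_leq/leq_pred.
case: x y y_in adj_yx => [v|[p i]] [w|[q j]] //=.
  case/andP; case: n IHn => [//|n] _ _ /= q_in v_q.
  have e_q : e (val q).1 (val q).2 by case: q {v_q} q_in => [[a b]] /= /andP [].
  case/orP: q_in => q_in; case/orP: v_q => /eqP ->.
  - exact: ball_subS.
  - exact: ball_step q_in e_q.
  - by apply: ball_step q_in _; rewrite e_sym.
  - exact: ball_subS.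
by move=> w_in /orP [] /eqP <-; rewrite /= w_in ?orbT.
Qed.

Lemma fssd_ball_inl m n u v :
  inl v \in ball (fssd m) n (inl u) -> v \in ball e n./2 u.
Proof. exact: fssd_ball_from_inl. Qed.

Lemma fssd_ball1_inr m (p q : {p | fssd_edge e p} * 'I_m) :
  inr q \in ball (fssd m) 1 (inr p) -> q = p.
Proof. by case: p q => [? ?] [? ?] /mem_ball1 /orP [/eqP [-> ->] |]. Qed.

Lemma colorable_fssd m k :
  packing_colorable e k -> packing_colorable (fssd m) k.+1.
Proof.
move=> /packing_colorableP [c c_col]; apply/packing_colorableP.
exists [ffun x => if x is inl u then lift ord0 (c u) else ord0].
move=> [u|p] [v|q] a_neq_b; rewrite !ffunE.
- move=> /lift_inj cuv; have u_neq_v : u != v by apply: contra a_neq_b => /eqP ->.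
  apply: contra (c_col _ _ u_neq_v cuv) => /fssd_ball_inl; apply: ball_sub.
  by rewrite lift0 leq_half_double -addnn; lia.
- by move/(congr1 (@nat_of_ord _)); rewrite lift0.
- by move/(congr1 (@nat_of_ord _)); rewrite lift0.
- by move=> _; apply: contra a_neq_b => /fssd_ball1_inr ->.
Qed.

Definition edge_pair (u y : T) : T * T :=
  if enum_rank u < enum_rank y then (u, y) else (y, u).

Lemma fssd_edge_pair u y : e u y -> fssd_edge e (edge_pair u y).
Proof.
rewrite /edge_pair /fssd_edge => euy; case: ifP => [lt_uy | ge_uy]; rewrite /= ?euy //.
rewrite e_sym euy ltn_neqAle leqNgt ge_uy andbT.
by apply: contraTneq euy => /val_inj/enum_rank_inj ->; rewrite e_irr.
Qed.

(* The [i]-th subdivision vertex of the edge [uy]; the junk value [inl u] is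
   only taken when [uy] is not an edge. *)
Definition subdiv m (u y : T) (i : 'I_m) : fssd_vertex e m :=
  if insub (edge_pair u y) is Some p then inr (p, i) else inl u.

Lemma subdivE m u y (i : 'I_m) : e u y ->
  exists2 p : {p | fssd_edge e p}, subdiv u y i = inr (p, i) & val p = edge_pair u y.
Proof.
move=> euy; rewrite /subdiv; case: insubP => [p _ pE | ]; first by exists p.
by rewrite fssd_edge_pair.
Qed.

Lemma subdiv_adj m u y (i : 'I_m) : e u y -> fssd m (inl u) (subdiv u y i).
Proof.
case/(subdivE i) => p -> /= ->; rewrite /edge_pair.
by case: ifP => _ /=; rewrite eqxx ?orbT.
Qed.

Lemma subdiv_inj m u y1 y2 (i1 i2 : 'I_m) : e u y1 -> e u y2 ->
  subdiv u y1 i1 = subdiv u y2 i2 -> y1 = y2 /\ i1 = i2.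
Proof.
case/(subdivE i1) => p1 -> p1E /(subdivE i2) [p2 -> p2E] [p12 ->]; split=> //.
move: p1E p2E; rewrite p12 => ->; rewrite /edge_pair.
by case: ifP => _; case: ifP => _ [] => *; subst.
Qed.

Lemma card_nbhd_fssd m u :
  #|[set y | e u y]| * m <= #|[set x | fssd m (inl u) x]|.
Proof.
set S := setX [set y | e u y] [set: 'I_m].
have S_inj : {in S &, injective (fun z => subdiv u z.1 z.2)}.
  move=> [y1 i1] [y2 i2]; rewrite !inE /= !andbT => e1 e2 /(subdiv_inj e1 e2).
  by case=> -> ->.
have -> : #|[set y | e u y]| * m = #|S| by rewrite cardsX cardsT card_ord.
rewrite -(card_in_imset S_inj).
apply: subset_leq_card; apply/subsetP => _ /imsetP [[y i] + ->].
by rewrite !inE /= andbT; apply: subdiv_adj.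
Qed.

Lemma pcn_fssd_mono m n : m <= n ->
  packing_chromatic_number (fssd m) <= packing_chromatic_number (fssd n).
Proof.
move=> le_mn.
pose widen (x : fssd_vertex e m) : fssd_vertex e n :=
  match x with inl u => inl u | inr (p, i) => inr (p, widen_ord le_mn i) end.
apply: (@pcn_hom _ _ _ _ widen); first by case=> [?|[? ?]] [?|[? ?]].
by case=> [?|[? ?]] [?|[? ?]] //= [] -> // /val_inj ->.
Qed.

Lemma fssd_recolor m n k (f : {ffun fssd_vertex e m -> 'I_k}) :
  0 < m -> 0 < k -> is_packing_coloring (fssd m) f ->
  (forall u, f (inl u) != 0 :> nat) -> packing_colorable (fssd n) k.
Proof.
move=> m_gt0 k_gt0 f_col f_inl_neq0; apply/packing_colorableP.
pose fold (x : fssd_vertex e n) : fssd_vertex e m :=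
  match x with inl u => inl u | inr (p, i) => inr (p, Ordinal (ltn_pmod i m_gt0)) end.
have fold_adj x y : fssd n x y -> fssd m (fold x) (fold y).
  by case: x => [?|[? ?]]; case: y => [?|[? ?]].
exists [ffun x => if x is inl v then f (inl v) else Ordinal k_gt0].
move=> [u|p] [v|q] a_neq_b; rewrite !ffunE.
- move=> fuv; have u_neq_v : inl u != inl v :> fssd_vertex e m.
    by apply: contra a_neq_b => /eqP [->].
  by apply: contra (f_col _ _ u_neq_v fuv) => /(ball_hom fold_adj).
- by move=> fu0; case/eqP: (f_inl_neq0 u); rewrite fu0.
- by move=> f0v; case/eqP: (f_inl_neq0 v); rewrite -f0v.
- by move=> _; apply: contra a_neq_b => /fssd_ball1_inr ->.
Qed.

End Subdivision.

Theorem proposition5 (T : finType) (e : rel T)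
    (e_sym : symmetric e) (e_irr : irreflexive e) (m : nat) :
  0 < m ->
  packing_chromatic_number e < m * min_degree e ->
  packing_chromatic_number (@fssd_adj T e m)
  = packing_chromatic_number (@fssd_adj T e m.+1).
Proof.
move=> m_gt0 lt_pcn; apply/eqP; rewrite eqn_leq pcn_fssd_mono //=.
set k := packing_chromatic_number (@fssd_adj T e m).
have [f f_col] := packing_colorableP _ _ (colorable_pcn (@fssd_adj T e m)).
have le_k : k <= (packing_chromatic_number e).+1.
  exact/pcn_le/(colorable_fssd e_sym)/colorable_pcn.
have T_gt0 : 0 < #|T|.
  apply: leq_trans (min_degree_le_card e); rewrite lt0n.
  by apply: contraTneq lt_pcn => ->; rewrite muln0.
have [u0 _] := card_gt0P T_gt0.
have f_inl_neq0 u : f (inl u) != 0 :> nat.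
  apply/eqP => fu0.
  have := card_nbhd_lt_color0 (@fssd_adj_sym _ _ m) (@fssd_adj_irr _ _ m) f_col fu0.
  have := card_nbhd_fssd e_sym e_irr m u.
  have := leq_mul (leqnn m) (min_degree_le e u); lia.
apply/pcn_le/(fssd_recolor _ m_gt0 _ f_col f_inl_neq0).
exact: leq_ltn_trans (ltn_ord (f (inl u0))).
Qed.
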